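(* Let $\mathbb{F}$ be a subfield of $\mathbb{C}$ and $r\in\mathbb{N}^{+}$. For every $n\in\mathbb{N}^{+}$ let $\overline{v_n}\in\mathbb{F}^{r}$ be a column vector. Let $(w_n)$ be a C-finite sequence (over $\mathbb{C}$) of positive real numbers, and let $(M_n)$ be a C-finite matrix sequence (over $\mathbb{C}$) of $r\times r$ matrices with entries in $\mathbb{F}$ such that $\overline{v_{n+1}}=\frac{1}{w_n}M_n\overline{v_n}$ for every $n$. Then for each $j=1,\dots,r$ the sequence $(\overline{v_n}[j])_n$ is C$^2$-finite over $\mathbb{C}$; moreover, there is a single C$^2$-finite recurrence (the same $s$ and the same coefficient sequences $c^{(0)}_n,\dots,c^{(s)}_n$) satisfied by all of the sequences $(\overline{v_n}[j])_n$, $j=1,\dots,r$.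
   Context: A sequence $(a_n)$ over a field $\mathbb{K}$ is C-finite if there exist $s\in\mathbb{N}$ and constants $c^{(0)},\dots,c^{(s-1)}\in\mathbb{K}$ such that $a_{n+s}=c^{(s-1)}a_{n+s-1}+\dots+c^{(0)}a_n$ for every $n\ge s$. It is C$^2$-finite if there exist $s\in\mathbb{N}$ and C-finite sequences $(c^{(0)}_n),\dots,(c^{(s)}_n)$ over $\mathbb{K}$ with $c^{(s)}_n\ne0$ for every $n$, such that $c^{(s)}_n a_{n+s}=c^{(s-1)}_n a_{n+s-1}+\dots+c^{(0)}_n a_n$ for every $n\ge s$. A sequence $(A_n)$ of matrices of a fixed size is a C-finite matrix sequence if for every position $(i,j)$ the sequence $(A_n[i,j])_n$ is C-finite. *)

From HB Require Import structures.
From mathcomp Require Import all_boot all_order all_algebra.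
Set Implicit Arguments. Unset Strict Implicit. Unset Printing Implicit Defensive.
Import Order.TTheory GRing.Theory Num.Theory.
Local Open Scope ring_scope.

Definition Cfinite (K : fieldType) (a : nat -> K) : Prop :=
  exists (s : nat) (c : nat -> K),
    forall n : nat, (s <= n)%N ->
      a (n + s)%N = \sum_(i < s) c i * a (n + i)%N.

Definition C2rec (K : fieldType) (s : nat) (c : nat -> nat -> K)
  (a : nat -> K) : Prop :=
  forall n : nat, (s <= n)%N ->
    c s n * a (n + s)%N = \sum_(i < s) c i n * a (n + i)%N.

Definition C2coeffs (K : fieldType) (s : nat) (c : nat -> nat -> K) : Prop :=
  (forall i : nat, (i <= s)%N -> Cfinite (c i)) /\ (forall n : nat, c s n != 0).

Definition C2finite (K : fieldType) (a : nat -> K) : Prop :=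
  exists (s : nat) (c : nat -> nat -> K), C2coeffs s c /\ C2rec s c a.

Definition Cfinite_mx (K : fieldType) (m n : nat) (A : nat -> 'M[K]_(m, n)) : Prop :=
  forall (i : 'I_m) (j : 'I_n), Cfinite (fun k => A k i j).

From HB Require Import structures.
From mathcomp Require Import all_boot all_order all_algebra.
From mathcomp Require Import mxtens zify ring.
From Stdlib Require Import Classical.
Import Order.TTheory GRing.Theory Num.Theory.
Local Open Scope ring_scope.
Set Implicit Arguments. Unset Strict Implicit. Unset Printing Implicit Defensive.

(* Write B(m,i) = M_(m+i-1) ... M_m for the transfer matrix
   over i steps, so that B(m,i) v_m = (w_m ... w_(m+i-1)) v_(m+i).  Any linear
   relation sum_i c_i B(m,i) = 0 among transfer matrices therefore yields a
   linear recurrence for every coordinate of v at once.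
   1. C-finite sequences form a ring closed under shifts, finite sums and
      products, determinants and complex conjugation (via the equivalent
      matrix-power form a_(n+N) = x P^n y).
   2. The k x k minors of the flattened B(m,0), ..., B(m,Q-1) are C-finite in
      m, hence so is gram k Q m, the sum of their squared moduli, which is
      nonnegative and vanishes iff all those minors vanish.
   3. Choose k maximal such that gram k s0 is not eventually zero for some
      s0 (rank_jump).  Every bordered (k+1)-minor eventually vanishes;
      Laplace expansion along the border gives, for each order q >= s0, a
      relation among B(m,0..q) with C-finite coefficients whose leading one
      is gram k s0 m.
   4. gram k s0 may vanish at isolated m, but never on a whole window of t
      consecutive indices; staggering t+1 such relations so that they end
      at the same index gives a leading coefficient that is a sum of
      nonnegative terms, one of them positive (here w_n > 0 is used). *)

Definition eventually_zero (K : fieldType) (a : nat -> K) : Prop :=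
  exists N, forall m, (N <= m)%N -> a m = 0.

Section CfiniteClosure.
Variable K : fieldType.
Implicit Types (a b : nat -> K).

(* A recurrence of order d holding only beyond a threshold N still makes a
   sequence C-finite: pad it with zero coefficients up to order N + d. *)
Lemma Cfinite_from a d (c : nat -> K) N :
  (forall m, (N <= m)%N -> a (m + d)%N = \sum_(i < d) c i * a (m + i)%N) ->
  Cfinite a.
Proof.
move=> H; exists (N + d)%N, (fun i => if (N <= i)%N then c (i - N)%N else 0).
move=> n _; rewrite big_split_ord /= big1 ?add0r; last first.
  by move=> i _; rewrite /= leqNgt ltn_ord mul0r.
rewrite addnA H ?leq_addl //; apply: eq_bigr => i _ /=.
by rewrite leq_addr addKn addnA.
Qed.

(* Eventual matrix-power form a_(n + N) = x P^n y.  It is equivalent to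
   C-finiteness, and sums and products are easy to build in this form. *)
Definition mxpow_rep a : Prop :=
  exists d (P : 'M[K]_d) (x : 'rV[K]_d) (y : 'cV[K]_d) N,
    forall n, a (n + N)%N = (x *m P ^+ n *m y) 0 0.

(* Cayley-Hamilton turns a matrix-power form into a recurrence whose
   coefficients are those of the characteristic polynomial of P. *)
Lemma mxpow_rep_Cfinite a : mxpow_rep a -> Cfinite a.
Proof.
case=> [[|d] [P [x [y [N H]]]]].
  apply: (@Cfinite_from _ 0 (fun _ => 0) N) => m Hm.
  by rewrite big_ord0 addn0 -(subnK Hm) H mxE big_ord0.
have CH := Cayley_Hamilton P; set p := char_poly P in CH.
have sp : size p = d.+2 by rewrite size_char_poly.
apply: (@Cfinite_from _ d.+1 (fun i => - p`_i) N) => m Hm.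
rewrite -(subnK Hm) -addnA (addnC N) addnA H.
have hornerP : horner_mx P p = \sum_(i < d.+2) p`_i *: P ^+ i.
  rewrite /horner_mx /horner_morph horner_coef size_map_poly sp.
  by apply: eq_bigr => i _; rewrite coef_map /= -mul_scalar_mx.
have lc : p`_d.+1 = 1 by move/monicP: (char_poly_monic P); rewrite /lead_coef sp.
rewrite hornerP big_ord_recr /= lc scale1r in CH.
have top : P ^+ d.+1 = - \sum_(i < d.+1) p`_i *: P ^+ i.
  by apply/eqP; rewrite -addr_eq0 addrC CH.
rewrite exprD top mulrN mulr_sumr -mulmxE mulmxN mulNmx mulmx_sumr mulmx_suml.
rewrite mxE summxE -sumrN; apply: eq_bigr => i _.
rewrite -scalemxAr -scalemxAr -scalemxAl mxE mulNr; congr (- (_ * _)).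
by rewrite addnAC H exprD mulmxE.
Qed.

(* Conversely a C-finite sequence is read off the powers of its companion
   matrix, acting on the row vector of s consecutive terms. *)
Lemma Cfinite_mxpow_rep a : Cfinite a -> mxpow_rep a.
Proof.
case=> s [c H].
pose P : 'M[K]_s :=
  \matrix_(i, j) (if (j.+1 < s)%N then (i == j.+1 :> nat)%:R else c i).
pose X m : 'rV[K]_s := \row_(j < s) a (m + j)%N.
have XS m : (s <= m)%N -> X m *m P = X m.+1.
  move=> Hm; apply/rowP => j; rewrite !mxE.
  under eq_bigr => i _ do rewrite !mxE.
  case Hj : (j.+1 < s)%N.
  - rewrite (bigD1 (Ordinal Hj)) //= eqxx mulr1 big1 ?addr0 ?addnS //.
    by move=> i /negPf Hi; rewrite -val_eqE /= in Hi; rewrite Hi mulr0.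
  - have ej : j.+1 = s by apply/eqP; rewrite eqn_leq ltn_ord leqNgt Hj.
    by rewrite addSnnS ej H //; apply: eq_bigr => i _; rewrite mulrC.
exists s, P, (X s), (\col_(j < s) (j == 0 :> nat)%:R), s => n.
have -> : X s *m P ^+ n = X (n + s)%N.
  elim: n => [|n IH]; first by rewrite expr0 mulmx1 add0n.
  by rewrite exprSr -mulmxE mulmxA IH XS ?leq_addl.
rewrite mxE; case: (posnP s) => [s0|spos].
  by clear XS; subst s; rewrite big_ord0 H ?big_ord0.
rewrite (bigD1 (Ordinal spos)) //= big1 ?addr0; first by rewrite !mxE addn0 mulr1.
by move=> i; rewrite !mxE -val_eqE /= => /negPf ->; rewrite mulr0.
Qed.

Lemma mxpow_rep_delay a d (P : 'M[K]_d) (x : 'rV[K]_d) (y : 'cV[K]_d) N N' :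
  (N <= N')%N -> (forall n, a (n + N)%N = (x *m P ^+ n *m y) 0 0) ->
  forall n, a (n + N')%N = ((x *m P ^+ (N' - N)) *m P ^+ n *m y) 0 0.
Proof.
by move=> HN H n; rewrite -{1}(subnK HN) addnA H addnC exprD !mulmxA.
Qed.

Lemma Cfinite_eq a b : a =1 b -> Cfinite a -> Cfinite b.
Proof.
move=> E [s [c H]]; exists s, c => n hn.
by rewrite -!E H //; apply: eq_bigr => i _; rewrite E.
Qed.

Lemma Cfinite_const (x : K) : Cfinite (fun _ => x).
Proof. by exists 1%N, (fun _ => 1) => n _; rewrite big_ord1 mul1r. Qed.

Lemma Cfinite_shift a k : Cfinite a -> Cfinite (fun n => a (n + k)%N).
Proof.
case=> s [c H]; exists s, c => n hn.
rewrite addnAC H ?(leq_trans hn (leq_addr _ _)) //.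
by apply: eq_bigr => i _; rewrite addnAC.
Qed.

(* Sums: block-diagonal matrix power, both parts started at a common index. *)
Lemma Cfinite_add a b : Cfinite a -> Cfinite b -> Cfinite (fun n => a n + b n).
Proof.
move=> /Cfinite_mxpow_rep [d1 [P1 [x1 [y1 [N1 H1]]]]].
move=> /Cfinite_mxpow_rep [d2 [P2 [x2 [y2 [N2 H2]]]]].
have H1' := mxpow_rep_delay (leq_maxl N1 N2) H1.
have H2' := mxpow_rep_delay (leq_maxr N1 N2) H2.
apply: mxpow_rep_Cfinite; exists (d1 + d2)%N, (block_mx P1 0 0 P2),
  (row_mx (x1 *m P1 ^+ (maxn N1 N2 - N1)) (x2 *m P2 ^+ (maxn N1 N2 - N2))),
  (col_mx y1 y2), (maxn N1 N2) => n.
have -> : block_mx P1 0 0 P2 ^+ n = block_mx (P1 ^+ n) 0 0 (P2 ^+ n).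
  elim: n => [|n IH]; first by rewrite !expr0 -scalar_mx_block.
  by rewrite !exprS IH -!mulmxE mulmx_block !mulmx0 !mul0mx !addr0 !add0r.
by rewrite mul_row_block !mulmx0 !addr0 !add0r mul_row_col mxE H1' H2'.
Qed.

(* Products: Kronecker product of the two matrix-power forms. *)
Lemma Cfinite_mul a b : Cfinite a -> Cfinite b -> Cfinite (fun n => a n * b n).
Proof.
move=> /Cfinite_mxpow_rep [d1 [P1 [x1 [y1 [N1 H1]]]]].
move=> /Cfinite_mxpow_rep [d2 [P2 [x2 [y2 [N2 H2]]]]].
have H1' := mxpow_rep_delay (leq_maxl N1 N2) H1.
have H2' := mxpow_rep_delay (leq_maxr N1 N2) H2.
set x1' := x1 *m _ in H1'; set x2' := x2 *m _ in H2'.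
apply: mxpow_rep_Cfinite.
exists (d1 * d2)%N, (P1 *t P2), (x1' *t x2'), (y1 *t y2), (maxn N1 N2) => n.
have -> : (x1' *t x2') *m (P1 *t P2) ^+ n = (x1' *m P1 ^+ n) *t (x2' *m P2 ^+ n).
  elim: n => [|n IH]; first by rewrite !expr0 !mulmx1.
  by rewrite !exprSr -!mulmxE !mulmxA IH tensmx_mul.
rewrite (tensmx_mul (x1' *m P1 ^+ n) (x2' *m P2 ^+ n) y1 y2) H1' H2' !mxE.
by rewrite !(ord1 (mxtens_unindex _).1) !(ord1 (mxtens_unindex _).2).
Qed.

Lemma Cfinite_sum (I : Type) (s : seq I) (P : pred I) (F : I -> nat -> K) :
  (forall i, P i -> Cfinite (F i)) ->
  Cfinite (fun n => \sum_(i <- s | P i) F i n).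
Proof.
move=> H; elim: s => [|i s IH].
  by apply: Cfinite_eq (Cfinite_const 0) => n; rewrite big_nil.
case Pi: (P i); last by apply: Cfinite_eq IH => n; rewrite big_cons Pi.
by apply: Cfinite_eq (Cfinite_add (H i Pi) IH) => n; rewrite big_cons Pi.
Qed.

Lemma Cfinite_prod (I : Type) (s : seq I) (P : pred I) (F : I -> nat -> K) :
  (forall i, P i -> Cfinite (F i)) ->
  Cfinite (fun n => \prod_(i <- s | P i) F i n).
Proof.
move=> H; elim: s => [|i s IH].
  by apply: Cfinite_eq (Cfinite_const 1) => n; rewrite big_nil.
case Pi: (P i); last by apply: Cfinite_eq IH => n; rewrite big_cons Pi.
by apply: Cfinite_eq (Cfinite_mul (H i Pi) IH) => n; rewrite big_cons Pi.
Qed.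

(* The determinant is a polynomial in the entries (Leibniz formula). *)
Lemma Cfinite_det k (A : nat -> 'M[K]_k) :
  (forall i j, Cfinite (fun n => A n i j)) -> Cfinite (fun n => \det (A n)).
Proof.
move=> H; apply: Cfinite_sum => s _.
apply: Cfinite_mul; first exact: Cfinite_const.
by apply: Cfinite_prod => i _; apply: H.
Qed.

(* A C-finite sequence of order s vanishing on s consecutive terms beyond
   index s vanishes from there on. *)
Lemma Cfinite_window a :
  Cfinite a -> ~ eventually_zero a ->
  exists t, forall n, (t <= n)%N -> exists2 j, (j < t)%N & a (n + j)%N != 0.
Proof.
case=> s [c H] nz; exists s => n hn.
case: (boolP [exists j : 'I_s, a (n + j)%N != 0]) => [/existsP [j hj]|].
  by exists j.
rewrite negb_exists => /forallP window; case: nz; exists n.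
elim/ltn_ind => m IH hm; case: (ltnP m (n + s)) => hms.
  have hj : (m - n < s)%N by lia.
  by have := window (Ordinal hj); rewrite negbK /= subnKC // => /eqP.
have -> : m = ((m - s) + s)%N by lia.
rewrite H; last by lia.
by rewrite big1 // => i _; rewrite IH ?mulr0 //; have := ltn_ord i; lia.
Qed.

End CfiniteClosure.

Lemma Cfinite_conj (C : numClosedFieldType) (a : nat -> C) :
  Cfinite a -> Cfinite (fun n => (a n)^*).
Proof.
case=> s [c H]; exists s, (fun i => (c i)^*) => n Hn.
by rewrite H // rmorph_sum; apply: eq_bigr => i _; rewrite rmorphM.
Qed.

(* Index bookkeeping for bordering a k x k minor to a (k+1) x (k+1) one:
   the new last column has index q and the new last row position rho. *)
Definition ext_col k (g : 'I_k -> nat) (q : nat) (b : 'I_k.+1) : nat :=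
  if unlift ord_max b is Some b' then g b' else q.

Definition ext_row r k (f : 'I_k -> 'I_r * 'I_r) (rho : 'I_r * 'I_r)
  (a : 'I_k.+1) : 'I_r * 'I_r :=
  if unlift ord_max a is Some a' then f a' else rho.

Lemma ext_col_le k s0 (g : 'I_k -> 'I_s0) q j :
  (s0 <= q)%N -> (ext_col (fun b => g b) q j <= q)%N.
Proof.
move=> h; rewrite /ext_col; case: (unlift _ _) => [b|] //.
exact: ltnW (leq_trans (ltn_ord _) h).
Qed.

Section TransferMatrices.
Variables (K : fieldType) (r : nat) (M : nat -> 'M[K]_r).

Fixpoint Mprod (m i : nat) : 'M[K]_r :=
  if i is i'.+1 then M (m + i')%N *m Mprod m i' else 1.

Lemma Cfinite_Mprod i a b : Cfinite_mx M -> Cfinite (fun m => Mprod m i a b).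
Proof.
move=> hM; elim: i a b => [|i IH] a b /=; first exact: Cfinite_const.
apply: (@Cfinite_eq _ (fun m => \sum_(k < r) M (m + i)%N a k * Mprod m i k b)).
  by move=> n; rewrite /= mxE.
apply: Cfinite_sum => k _.
exact: Cfinite_mul (Cfinite_shift i (hM a k)) (IH k b).
Qed.

(* The k x k minor of the r^2 x Q matrix whose columns are the transfer
   matrices Mprod m 0, Mprod m 1, ... (flattened), with rows f, columns g. *)
Definition minor k (f : 'I_k -> 'I_r * 'I_r) (g : 'I_k -> nat) (m : nat) : K :=
  \det (\matrix_(a, b) Mprod m (g b) (f a).1 (f a).2).

Lemma Cfinite_minor k (f : 'I_k -> 'I_r * 'I_r) g :
  Cfinite_mx M -> Cfinite (minor f g).
Proof.
move=> hM; apply: Cfinite_det => a b.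
by apply: Cfinite_eq (Cfinite_Mprod (g b) (f a).1 (f a).2 hM) => n; rewrite mxE.
Qed.

Lemma minor_ext k (f1 f2 : 'I_k -> 'I_r * 'I_r) g1 g2 m :
  f1 =1 f2 -> g1 =1 g2 -> minor f1 g1 m = minor f2 g2 m.
Proof.
by move=> E1 E2; congr (\det _); apply/matrixP => a b; rewrite !mxE E1 E2.
Qed.

(* Signed cofactor of the entry in the last row and column j of the bordered
   minor minor (ext_row f rho) (ext_col g q); it does not depend on rho. *)
Definition cof k (f : 'I_k -> 'I_r * 'I_r) (g : 'I_k -> nat) q (j : 'I_k.+1)
    (m : nat) : K :=
  (-1) ^+ (k + j) *
  \det (\matrix_(a < k, b < k) Mprod m (ext_col g q (lift j b)) (f a).1 (f a).2).

Lemma Cfinite_cof k (f : 'I_k -> 'I_r * 'I_r) g q j :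
  Cfinite_mx M -> Cfinite (cof f g q j).
Proof.
move=> hM; apply: Cfinite_mul; first exact: Cfinite_const.
apply: Cfinite_det => a b.
by apply: Cfinite_eq (Cfinite_Mprod _ _ _ hM) => n; rewrite mxE.
Qed.

Lemma cof_max k (f : 'I_k -> 'I_r * 'I_r) g q m :
  cof f g q ord_max m = minor f g m.
Proof.
rewrite /cof /= exprD -exprMn mulrNN mulr1 expr1n mul1r.
by congr (\det _); apply/matrixP => a b; rewrite !mxE /ext_col liftK.
Qed.

Lemma minor_ext_row k (f : 'I_k -> 'I_r * 'I_r) g q rho m :
  minor (ext_row f rho) (ext_col g q) m =
  \sum_(j : 'I_k.+1) Mprod m (ext_col g q j) rho.1 rho.2 * cof f g q j m.
Proof.
rewrite /minor (expand_det_row _ ord_max); apply: eq_bigr => j _.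
rewrite !mxE /ext_row unlift_none; congr (_ * (_ * \det _)).
by apply/matrixP => a b; rewrite !mxE /ext_row liftK.
Qed.

Lemma minor_relation k (f : 'I_k -> 'I_r * 'I_r) g q m :
  (forall rho, minor (ext_row f rho) (ext_col g q) m = 0) ->
  \sum_(j : 'I_k.+1) cof f g q j m *: Mprod m (ext_col g q j) = 0.
Proof.
move=> H; apply/matrixP => a b.
rewrite summxE [RHS]mxE -[RHS](H (a, b)) minor_ext_row.
by apply: eq_bigr => j _; rewrite mxE mulrC.
Qed.

Section Orbit.
Variables (w : nat -> K) (v : nat -> 'cV[K]_r).
Hypotheses (hw0 : forall k, w k != 0)
           (hrec : forall k, v k.+1 = (w k)^-1 *: (M k *m v k)).

Definition wprod (m i : nat) : K := \prod_(l < i) w (m + l)%N.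

Lemma Mprod_orbit m i : Mprod m i *m v m = wprod m i *: v (m + i)%N.
Proof.
elim: i => [|i IH] /=; first by rewrite mul1mx /wprod big_ord0 scale1r addn0.
rewrite -mulmxA IH -scalemxAr /wprod big_ord_recr /= addnS hrec scalerA.
by rewrite mulfK.
Qed.

End Orbit.

Lemma Cfinite_wprod (w : nat -> K) i :
  Cfinite w -> Cfinite (fun m => wprod w m i).
Proof.
by move=> hw; apply: Cfinite_prod => l _; apply: Cfinite_shift.
Qed.

End TransferMatrices.

Lemma last_true (P : nat -> Prop) N :
  P 1%N -> ~ P N.+1 -> exists k, P k /\ ~ P k.+1.
Proof.
move=> P1 PN; apply: NNPP => H; apply: PN.
elim: N => [|n IH] //; apply: NNPP => nP; apply: H; by exists n.+1.
Qed.

Section Gram.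
Variables (C : numClosedFieldType) (r : nat) (M : nat -> 'M[C]_r).

(* Sum of the squared moduli of all k x k minors whose columns lie among
   the transfer matrices Mprod m 0, ..., Mprod m (Q-1): it is a nonnegative
   C-finite sequence in m, and vanishes iff these span fewer than k dims. *)
Definition gram k Q m : C :=
  \sum_(f : {ffun 'I_k -> 'I_r * 'I_r}) \sum_(g : {ffun 'I_k -> 'I_Q})
     minor M f (fun b => g b) m * (minor M f (fun b => g b) m)^*.

Lemma gram_ge0 k Q m : 0 <= gram k Q m.
Proof.
by apply: sumr_ge0 => f _; apply: sumr_ge0 => g _; rewrite -normCK exprn_ge0.
Qed.

Lemma gram_eq0 k Q m : gram k Q m = 0 ->
  forall (f : {ffun 'I_k -> 'I_r * 'I_r}) (g : {ffun 'I_k -> 'I_Q}),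
    minor M f (fun b => g b) m = 0.
Proof.
have sq_ge0 f (g : {ffun 'I_k -> 'I_Q}) :
    0 <= minor M f (fun b => g b) m * (minor M f (fun b => g b) m)^*.
  by rewrite -normCK exprn_ge0.
move=> /psumr_eq0P gram0 f g.
have row_ge0 f0 : 0 <= \sum_(g0 : {ffun 'I_k -> 'I_Q})
    minor M f0 (fun b => g0 b) m * (minor M f0 (fun b => g0 b) m)^*.
  exact: sumr_ge0.
have /psumr_eq0P := gram0 (fun f0 _ => row_ge0 f0) f isT.
move=> /(_ (fun g0 _ => sq_ge0 f g0) g isT) /eqP.
by rewrite -normCK expf_eq0 /= normr_eq0 => /eqP.
Qed.

Lemma Cfinite_gram k Q : Cfinite_mx M -> Cfinite (gram k Q).
Proof.
move=> hM; apply: Cfinite_sum => f _; apply: Cfinite_sum => g _.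
by apply: Cfinite_mul; [|apply: Cfinite_conj]; apply: Cfinite_minor.
Qed.

(* "Rank at least k infinitely often": for some Q, the k-minors among the
   first Q transfer matrices are not eventually all zero. *)
Definition has_rank k : Prop := exists Q, ~ eventually_zero (gram k Q).

(* Mprod m 0 is the identity, so rank 1 is always reached. *)
Lemma has_rank1 : (0 < r)%N -> has_rank 1.
Proof.
move=> hr; exists 1%N; case=> N HN.
have := gram_eq0 (HN N (leqnn N))
  [ffun _ => (Ordinal hr, Ordinal hr)] [ffun _ => ord0].
rewrite /minor det_mx11 !mxE !ffunE /=.
change ((1%:M : 'M[C]_r) (Ordinal hr) (Ordinal hr) = 0 -> False).
by rewrite mxE eqxx => /eqP; rewrite oner_eq0.
Qed.

(* More than r^2 rows must repeat, so such minors vanish identically. *)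
Lemma has_rank_big : ~ has_rank (r * r).+1.
Proof.
case=> Q; apply; exists 0%N => m _; apply: big1 => f _; apply: big1 => g _.
have : ~~ injectiveb f.
  by apply/negP => /injectiveP /leq_card; rewrite card_prod !card_ord ltnn.
case/injectivePn => a [b ab fab].
by rewrite /minor (determinant_alternate ab) ?mul0r // => j; rewrite !mxE fab.
Qed.

Lemma rank_jump : (0 < r)%N ->
  exists k, has_rank k /\ forall Q, eventually_zero (gram k.+1 Q).
Proof.
move=> hr; have [k [hk nk]] := last_true (has_rank1 hr) has_rank_big.
by exists k; split => // Q; apply: NNPP => nz; apply: nk; exists Q.
Qed.

Lemma gram_ext_minor k s0 q Q m : gram k.+1 Q.+1 m = 0 -> (s0 <= q <= Q)%N ->
  forall (f : {ffun 'I_k -> 'I_r * 'I_r}) (g : {ffun 'I_k -> 'I_s0}) rho,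
    minor M (ext_row f rho) (ext_col (fun b => g b) q) m = 0.
Proof.
move=> gram0 /andP [hs0 hq] f g rho.
have := gram_eq0 gram0 [ffun a => ext_row f rho a]
                       [ffun b => inord (ext_col (fun b => g b) q b)].
move <-; apply: minor_ext => b; rewrite ffunE //= inordK //.
exact: leq_trans (ext_col_le g b hs0) hq.
Qed.

(* Coefficients of the relation obtained by weighting, for each k-minor
   (f, g) with columns below s0, the cofactor relation of its bordering by
   column q with the conjugate of that minor, and collecting by index i. *)
Definition coef_rel k s0 q i m : C :=
  \sum_(f : {ffun 'I_k -> 'I_r * 'I_r}) \sum_(g : {ffun 'I_k -> 'I_s0})
    (minor M f (fun b => g b) m)^* *
    \sum_(j : 'I_k.+1) (ext_col (fun b => g b) q j == i)%:R *
                       cof M f (fun b => g b) q j m.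

Lemma Cfinite_coef_rel k s0 q i : Cfinite_mx M -> Cfinite (coef_rel k s0 q i).
Proof.
move=> hM; apply: Cfinite_sum => f _; apply: Cfinite_sum => g _.
apply: Cfinite_mul; first exact/Cfinite_conj/Cfinite_minor.
apply: Cfinite_sum => j _; apply: Cfinite_mul; first exact: Cfinite_const.
exact: Cfinite_cof.
Qed.

Lemma coef_rel_top k s0 q m : (s0 <= q)%N -> coef_rel k s0 q q m = gram k s0 m.
Proof.
move=> hq; apply: eq_bigr => f _; apply: eq_bigr => g _.
rewrite (bigD1 ord_max) //= big1 ?addr0.
  by rewrite /ext_col unlift_none eqxx mul1r cof_max mulrC.
move=> j hj; rewrite /ext_col; case E: (unlift ord_max j) => [b|].
  have : (g b < q)%N by apply: leq_trans (ltn_ord _) hq.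
  by rewrite ltn_neqAle => /andP [/negPf -> _]; rewrite mul0r.
by move: E hj; case: (unliftP ord_max j) => //= -> _; rewrite eqxx.
Qed.

End Gram.

Lemma sum_collect (K : fieldType) r n x (F : nat -> 'M[K]_r) :
  (x < n)%N -> \sum_(i < n) (x == i :> nat)%:R *: F i = F x.
Proof.
move=> h; rewrite (bigD1 (Ordinal h)) //= eqxx scale1r big1 ?addr0 //.
by move=> i; rewrite -val_eqE /= eq_sym => /negPf ->; rewrite scale0r.
Qed.

Section Relation.
Variables (C : numClosedFieldType) (r : nat) (M : nat -> 'M[C]_r).

Lemma coef_rel_relation k s0 q m : (s0 <= q)%N ->
  (forall (f : {ffun 'I_k -> 'I_r * 'I_r}) (g : {ffun 'I_k -> 'I_s0}) rho,
     minor M (ext_row f rho) (ext_col (fun b => g b) q) m = 0) ->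
  \sum_(i < q.+1) coef_rel M k s0 q i m *: Mprod M m i = 0.
Proof.
move=> hq ext0.
under eq_bigr => i _ do rewrite scaler_suml.
rewrite exchange_big /=; apply: big1 => f _.
under eq_bigr => i _ do rewrite scaler_suml.
rewrite exchange_big /=; apply: big1 => g _.
under eq_bigr => i _ do rewrite mulr_sumr scaler_suml.
rewrite exchange_big /=.
rewrite -[RHS](scaler0 _ (minor M f (fun b => g b) m)^*).
rewrite -[X in _ = _ *: X](minor_relation (ext0 f g)) scaler_sumr.
apply: eq_bigr => j _.
rewrite -(sum_collect (n := q.+1) (Mprod M m) (ext_col_le g j hq)).
rewrite scaler_sumr scaler_sumr.
by apply: eq_bigr => i _; rewrite !scalerA; congr (_ *: _); ring.
Qed.

Variables (w : nat -> C) (v : nat -> 'cV[C]_r).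
Hypotheses (hw0 : forall k, w k != 0)
           (hrec : forall k, v k.+1 = (w k)^-1 *: (M k *m v k)).

Lemma orbit_relation k s0 q Q m : gram M k.+1 Q.+1 m = 0 -> (s0 <= q <= Q)%N ->
  forall j : 'I_r,
  \sum_(i < q.+1) coef_rel M k s0 q i m * wprod w m i * v (m + i)%N j 0 = 0.
Proof.
move=> gram0 hq j; have hs0 : (s0 <= q)%N by case/andP: hq.
pose rel := \sum_(i < q.+1) coef_rel M k s0 q i m *: Mprod M m i.
transitivity ((rel *m v m) j 0).
  rewrite mulmx_suml summxE; apply: eq_bigr => i _.
  by rewrite -scalemxAl (Mprod_orbit hw0 hrec) scalerA mxE.
by rewrite /rel (coef_rel_relation hs0 (gram_ext_minor gram0 hq)) mul0mx mxE.
Qed.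

End Relation.

Section Staggering.
Variable K : fieldType.

Lemma sum_from n b (G : nat -> K) : (b <= n)%N ->
  \sum_(p < n) (if (b <= p)%N then G p else 0) = \sum_(i < n - b) G (b + i)%N.
Proof.
move=> h; rewrite -(big_mkord xpredT (fun p => if (b <= p)%N then G p else 0)).
rewrite (big_cat_nat (leq0n b) h) /= big_nat_cond big1 ?add0r; last first.
  by move=> i /andP [/andP [_ hi] _]; rewrite leqNgt hi.
rewrite -{1}(add0n b) big_addn big_mkord; apply: eq_bigr => i _.
by rewrite leq_addl addnC.
Qed.

Variables (e : nat -> nat -> nat -> K) (N0 J : nat).

(* Superposition of J+1 linear relations: relation j has coefficients
   e j i (i <= L - j) and starts at index n + N0 + j, so that all of them end
   at index n + N0 + L; stagger p n is the total coefficient of a_(n+p). *)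
Definition stagger (p n : nat) : K :=
  \sum_(j < J.+1)
    if (N0 + j <= p)%N then e j (p - (N0 + j)) (n + N0 + j)%N else 0.

Lemma stagger_relation L (a : nat -> K) : (J <= L)%N ->
  (forall n j, (j <= J)%N ->
     \sum_(i < (L - j).+1) e j i (n + N0 + j)%N * a (n + N0 + j + i)%N = 0) ->
  forall n, \sum_(p < (N0 + L).+1) stagger p n * a (n + p)%N = 0.
Proof.
move=> hJ rel n; rewrite /stagger.
under eq_bigr => p _ do rewrite mulr_suml.
rewrite exchange_big /=; apply: big1 => j _.
have hj : (j <= J)%N by rewrite -ltnS.
under eq_bigr => p _ do rewrite (fun_if (fun x => x * a (n + p)%N)) mul0r.
rewrite (@sum_from _ _ (fun p => e j (p - (N0 + j)) (n + N0 + j) * a (n + p)%N));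
  last by lia.
have -> : ((N0 + L).+1 - (N0 + j) = (L - j).+1)%N by lia.
rewrite -[RHS](rel n j hj); apply: eq_bigr => i _.
by rewrite addKn !addnA.
Qed.

Lemma stagger_top L n : (J <= L)%N ->
  stagger (N0 + L) n = \sum_(j < J.+1) e j (L - j) (n + N0 + j)%N.
Proof.
move=> hJ; apply: eq_bigr => j _; have hj := ltn_ord j.
by rewrite ifT; [congr e; lia | lia].
Qed.

Lemma Cfinite_stagger p : (forall j i, Cfinite (e j i)) -> Cfinite (stagger p).
Proof.
move=> he; apply: Cfinite_sum => j _.
case: (N0 + j <= p)%N; last exact: Cfinite_const.
by apply: Cfinite_eq (Cfinite_shift (N0 + j) (he _ _)) => n; rewrite addnA.
Qed.

End Staggering.

Section Normalisation.
Variables (K : fieldType) (s : nat) (e : nat -> nat -> K).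

Definition solved_coeffs (i n : nat) : K := if i == s then e s n else - e i n.

Lemma C2coeffs_solved :
  (forall p, Cfinite (e p)) -> (forall n, e s n != 0) -> C2coeffs s solved_coeffs.
Proof.
move=> he top; split => [i _|n]; last by rewrite /solved_coeffs eqxx.
rewrite /solved_coeffs; case: eqP => _ //.
apply: Cfinite_eq (Cfinite_mul (Cfinite_const (-1)) (he i)) => n.
by rewrite mulN1r.
Qed.

Lemma C2rec_solved (a : nat -> K) :
  (forall n, \sum_(p < s.+1) e p n * a (n + p)%N = 0) -> C2rec s solved_coeffs a.
Proof.
move=> rel n _; rewrite /solved_coeffs eqxx.
move: (rel n); rewrite big_ord_recr /= => /eqP; rewrite addrC addr_eq0 => /eqP ->.
rewrite -sumrN; apply: eq_bigr => i _.
by rewrite (ltn_eqF (ltn_ord i)) mulNr.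
Qed.

End Normalisation.

Lemma wprod_gt0 (R : numFieldType) (w : nat -> R) m i :
  (forall k, 0 < w k) -> 0 < wprod w m i.
Proof. by move=> hw; apply: prodr_gt0. Qed.

Lemma psum_window_neq0 (R : numDomainType) t (c d : nat -> R) :
  (forall l, 0 <= c l) -> (forall l, 0 < d l) ->
  (exists2 j, (j <= t)%N & c j != 0) -> \sum_(l < t.+1) c l * d l != 0.
Proof.
move=> c_ge0 d_gt0 [j hj nzj].
rewrite psumr_neq0 => [|l _]; last by rewrite mulr_ge0 ?c_ge0 ?ltW ?d_gt0.
apply/hasP; exists (Ordinal (hj : (j < t.+1)%N)); first exact: mem_index_enum.
by rewrite /= mulr_gt0 // lt_def nzj c_ge0.
Qed.

Unset Implicit Arguments.

Theorem mainTheorem6 (C : numClosedFieldType) (F : {pred C})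
  (HF : divring_closed F) (r : nat) (hr : (0 < r)%N)
  (v : nat -> 'cV[C]_r) (w : nat -> C) (M : nat -> 'M[C]_r)
  (hvF : forall k (i : 'I_r), v k i 0 \in F)
  (hMF : forall k (i j : 'I_r), M k i j \in F)
  (hw : Cfinite w) (hwpos : forall k, 0 < w k)
  (hM : Cfinite_mx M)
  (hrec : forall k, v k.+1 = (w k)^-1 *: (M k *m v k)) :
  (forall j : 'I_r, C2finite (fun k => v k j 0)) /\
  (exists (s : nat) (c : nat -> nat -> C),
      C2coeffs s c /\ forall j : 'I_r, C2rec s c (fun k => v k j 0)).
Proof.
suff [s [c [hc hrecs]]] : exists (s : nat) (c : nat -> nat -> C),
    C2coeffs s c /\ forall j : 'I_r, C2rec s c (fun k => v k j 0).
  by split => [j|]; exists s, c.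
have hw0 k : w k != 0 by rewrite lt0r_neq0.
have [k [[s0 nz_gram] rank_small]] := rank_jump M hr.
have [t window] := Cfinite_window (Cfinite_gram k s0 hM) nz_gram.
have [N1 gram0] := rank_small (s0 + t).+1.
(* Beyond N0 the relations of orders L - j, j <= t, all hold. *)
pose N0 := maxn N1 t; pose L := (s0 + t)%N.
pose e (j i m : nat) := coef_rel M k s0 (L - j)%N i m * wprod w m i.
have lead (j m : nat) :
    (j <= t)%N -> e j (L - j)%N m = gram M k s0 m * wprod w m (L - j)%N.
  by move=> hj; rewrite /e coef_rel_top //; lia.
exists (N0 + L)%N, (solved_coeffs (N0 + L) (stagger e N0 t)); split.
- apply: C2coeffs_solved => [p|n].
    apply: Cfinite_stagger => j i.
    exact: Cfinite_mul (Cfinite_coef_rel _ _ _ _ hM) (Cfinite_wprod _ hw).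
  rewrite stagger_top ?leq_addl //.
  rewrite (eq_bigr _ (fun (l : 'I_t.+1) _ => lead l _ (ltn_ord l))).
  have [j hj nzj] := window (n + N0)%N (leq_trans (leq_maxr _ _) (leq_addl _ _)).
  apply: (@psum_window_neq0 _ _ (fun l => gram M k s0 (n + N0 + l)%N)
                                (fun l => wprod w (n + N0 + l)%N (L - l)%N)).
  + by move=> l; apply: gram_ge0.
  + by move=> l; apply: wprod_gt0.
  + by exists j; first exact: ltnW.
- move=> j; apply: C2rec_solved => n.
  apply: (@stagger_relation _ e N0 t L (fun k => v k j 0)) => [|{}n l hl].
    exact: leq_addl.
  by apply: (orbit_relation hw0 hrec (gram0 _ _)); lia.
Qed.
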